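(* Let $M=\{D_1,\dots,D_m\}$, $m\ge3$, be a 2-disk system of pairwise distinct disks with Vietoris–Rips scale $\nu_M>0$, and let $\lambda\ge\nu_M$. Then $\bigcap_{i=1}^m D(c_i;\lambda r_i)\ne\emptyset$ if and only if $\rho_M(\lambda)\ge0$. In particular $\rho_M(\sqrt{4/3}\,\nu_M)\ge0$.
   Context: A 2-disk system is a finite collection of closed disks $D_i=D(c_i;r_i)\subset\mathbb R^2$ with $r_i>0$; $\partial D$ is the boundary circle. $\nu_M=\max_{i<j}\|c_i-c_j\|/(r_i+r_j)$ is the Vietoris–Rips scale. Definition of $d_{ij}$ for two intersecting disks $D_i,D_j$ ($i\ne j$): write $c_j-c_i=(a,b)$, $\mathbf n_{ij}=(-b,a)$. (1) If $\partial D_i\cap\partial D_j\ne\emptyset$, $d_{ij}$ is the unique point of $\partial D_i\cap\partial D_j$ with $\langle d_{ij}-c_i,\mathbf n_{ij}\rangle\ge0$. (2) If $\partial D_i\cap\partial D_j=\emptyset$, let $\lambda_0=\|c_i-c_j\|/|r_i-r_j|$ and $d_{ij}$ is the unique point of $\partial D(c_i;\lambda_0 r_i)\cap\partial D(c_j;\lambda_0 r_j)$ (equal to $c_i$ if $c_i=c_j$). $d_{ij}(\lambda)$ denotes this point for the rescaled disks $D(c_i;\lambda r_i),D(c_j;\lambda r_j)$. For $\lambda\ge\nu_M$, $\rho_M(\lambda)=\max_{i\ne j}\min_{k\notin\{i,j\}}\big(\lambda r_k-\|d_{ij}(\lambda)-c_k\|\big)$. *)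

From Stdlib Require Import Reals Lra List Arith ClassicalEpsilon.
Open Scope R_scope.

Definition pt := (R * R)%type.

Definition pdist (p q : pt) : R :=
  sqrt ((fst p - fst q)^2 + (snd p - snd q)^2).

(* A 2-disk system of m disks: D_i = D(c i; r i), i = 0..m-1. *)

Definition lmax (l : list R) : R :=
  match l with nil => 0 | x :: t => fold_right Rmax x t end.
Definition lmin (l : list R) : R :=
  match l with nil => 0 | x :: t => fold_right Rmin x t end.

Definition idx_pairs (m : nat) : list (nat * nat) :=
  flat_map (fun i => map (fun j => (i, j))
                          (filter (fun j => negb (Nat.eqb i j)) (seq 0 m)))
           (seq 0 m).

Definition nuM (m : nat) (c : nat -> pt) (r : nat -> R) : R :=
  lmax (map (fun ij => pdist (c (fst ij)) (c (snd ij)) / (r (fst ij) + r (snd ij)))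
            (idx_pairs m)).

(* <d - c_i, n_ij>, where c_j - c_i = (a,b) and n_ij = (-b, a) *)
Definition cross_n (ci cj d : pt) : R :=
  let a := fst cj - fst ci in
  let b := snd cj - snd ci in
  (fst d - fst ci) * (- b) + (snd d - snd ci) * a.

(* Defining property of d_ij(lambda) (for the rescaled disks
   D(c_i; lambda r_i), D(c_j; lambda r_j)):
   (1) if the boundary circles meet, d is the point of the intersection
       with <d - c_i, n_ij> >= 0;
   (2) otherwise, with lambda0 = |c_i - c_j| / |r_i - r_j| (computed for the
       rescaled radii; the factor lambda cancels, so we use lambda0 * r_i,
       lambda0 * r_j directly), d lies on both circles
       dD(c_i; lambda0 r_i) and dD(c_j; lambda0 r_j) (d = c_i if c_i = c_j). *)
Definition dij_spec (ci cj : pt) (ri rj lam : R) (d : pt) : Prop :=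
  ((exists q, pdist q ci = lam * ri /\ pdist q cj = lam * rj) ->
     pdist d ci = lam * ri /\ pdist d cj = lam * rj /\ 0 <= cross_n ci cj d)
  /\
  (~ (exists q, pdist q ci = lam * ri /\ pdist q cj = lam * rj) ->
     let lam0 := pdist ci cj / (lam * Rabs (ri - rj)) * lam in
     pdist d ci = lam0 * ri /\ pdist d cj = lam0 * rj).

(* d_ij(lambda): "the unique point" with the defining property, chosen via
   Hilbert's epsilon (uniqueness is part of the paper's claim). *)
Definition dij (c : nat -> pt) (r : nat -> R) (lam : R) (i j : nat) : pt :=
  epsilon (inhabits (0, 0)) (dij_spec (c i) (c j) (r i) (r j) lam).

Definition rhoM (m : nat) (c : nat -> pt) (r : nat -> R) (lam : R) : R :=
  lmax (map (fun ij =>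
          let i := fst ij in let j := snd ij in
          lmin (map (fun k => lam * r k - pdist (dij c r lam i j) (c k))
                    (filter (fun k => andb (negb (Nat.eqb k i)) (negb (Nat.eqb k j)))
                            (seq 0 m))))
        (idx_pairs m)).

From Stdlib Require Import Reals Lra Lia Psatz List Arith ClassicalEpsilon.
Open Scope R_scope.

(* If the disks have a common point, push it along a ray to the boundary of some
   disk D_i and then rotate it along that circle.  Either it leaves the other disks,
   and the exit point lies in the intersection on two circles, so it is some d_ik
   (the upper intersection point is unique); or the whole circle, hence the whole
   disk D_i, lies in the other disks, and so does d_ik.  Conversely d_ij always lies
   in D_i and D_j, so rho >= 0 exhibits a common point.
   For the last claim, minimise p |-> max_i |p - c_i| / r_i.  If the minimum mu
   exceeded sqrt(4/3) nu, the unit vectors from c_s towards the minimiser, over the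
   disks D(c_s; mu r_s) whose boundary passes through it, would make pairwise angles
   below 2pi/3 (as |c_i - c_j| <= nu (r_i + r_j)), hence lie in an open half-plane,
   and moving against it would decrease the maximum. *)

Definition sqdist (p q : pt) : R := (fst p - fst q)^2 + (snd p - snd q)^2.

Lemma sqdist_ge0 p q : 0 <= sqdist p q.
Proof.
  unfold sqdist; pose proof (pow2_ge_0 (fst p - fst q)); pose proof (pow2_ge_0 (snd p - snd q)).
  lra.
Qed.

Lemma pdist_ge0 p q : 0 <= pdist p q.
Proof. apply sqrt_pos. Qed.

Lemma pdist_sqr p q : pdist p q ^ 2 = sqdist p q.
Proof. apply pow2_sqrt, sqdist_ge0. Qed.

Lemma pdist_eq_sqdist p q d : 0 <= d -> pdist p q = d <-> sqdist p q = d ^ 2.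
Proof.
  intros Hd; split; intros H.
  - rewrite <- H; symmetry; apply pdist_sqr.
  - unfold pdist; fold (sqdist p q); rewrite H; apply sqrt_pow2, Hd.
Qed.

Lemma pdist_le_sqdist p q d : 0 <= d -> pdist p q <= d <-> sqdist p q <= d ^ 2.
Proof.
  intros Hd; rewrite <- pdist_sqr; pose proof (pdist_ge0 p q); split; intros E; nra.
Qed.

Lemma pdist_lt_sqdist p q d : 0 <= d -> pdist p q < d <-> sqdist p q < d ^ 2.
Proof.
  intros Hd; rewrite <- pdist_sqr; pose proof (pdist_ge0 p q); split; intros E; nra.
Qed.

Lemma pdist_sym p q : pdist p q = pdist q p.
Proof. unfold pdist; f_equal; ring. Qed.

Lemma pdist_eq0 p q : pdist p q = 0 -> p = q.
Proof.
  destruct p as [a b], q as [a' b']; intros H.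
  apply pdist_eq_sqdist in H; [|lra]; unfold sqdist in H; cbn [fst snd] in H.
  pose proof (pow2_ge_0 (a - a')); pose proof (pow2_ge_0 (b - b')).
  f_equal; nra.
Qed.

Lemma pdist_gt0 p q : p <> q -> 0 < pdist p q.
Proof.
  intros H; destruct (pdist_ge0 p q) as [|E]; auto.
  symmetry in E; apply pdist_eq0 in E; contradiction.
Qed.

Lemma pdist_ge_of_sqdist p q d : d ^ 2 <= sqdist p q -> d <= pdist p q.
Proof.
  intros H; apply Rsqr_incr_0_var; [|apply pdist_ge0].
  unfold Rsqr; rewrite <- pdist_sqr in H; lra.
Qed.

Lemma pdist_ge_abs_fst p q : Rabs (fst p - fst q) <= pdist p q.
Proof.
  apply pdist_ge_of_sqdist; rewrite pow2_abs; unfold sqdist.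
  pose proof (pow2_ge_0 (snd p - snd q)); lra.
Qed.

Lemma pdist_ge_abs_snd p q : Rabs (snd p - snd q) <= pdist p q.
Proof.
  apply pdist_ge_of_sqdist; rewrite pow2_abs; unfold sqdist.
  pose proof (pow2_ge_0 (fst p - fst q)); lra.
Qed.

Lemma norm2_triangle u1 u2 v1 v2 :
  sqrt ((u1 + v1)^2 + (u2 + v2)^2) <= sqrt (u1^2 + u2^2) + sqrt (v1^2 + v2^2).
Proof.
  assert (Hu : 0 <= u1^2 + u2^2) by nra. assert (Hv : 0 <= v1^2 + v2^2) by nra.
  pose proof (pow2_sqrt _ Hu) as Su. pose proof (pow2_sqrt _ Hv) as Sv.
  pose proof (sqrt_pos (u1^2 + u2^2)). pose proof (sqrt_pos (v1^2 + v2^2)).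
  set (a := sqrt (u1^2 + u2^2)) in *. set (b := sqrt (v1^2 + v2^2)) in *.
  (* Cauchy-Schwarz, via Lagrange's identity *)
  assert (CS : u1 * v1 + u2 * v2 <= a * b).
  { apply Rsqr_incr_0_var; [|nra]. unfold Rsqr.
    pose proof (pow2_ge_0 (u1 * v2 - u2 * v1)); nra. }
  rewrite <- (sqrt_pow2 (a + b)) by lra. apply sqrt_le_1_alt. nra.
Qed.

Lemma pdist_triangle p q s : pdist p s <= pdist p q + pdist q s.
Proof.
  unfold pdist.
  replace (fst p - fst s) with ((fst p - fst q) + (fst q - fst s)) by ring.
  replace (snd p - snd s) with ((snd p - snd q) + (snd q - snd s)) by ring.
  apply norm2_triangle.
Qed.

Lemma pdist_convex (a b z : pt) s : 0 <= s <= 1 ->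
  pdist (s * fst a + (1 - s) * fst b, s * snd a + (1 - s) * snd b) z
  <= s * pdist a z + (1 - s) * pdist b z.
Proof.
  intros Hs; unfold pdist; cbn [fst snd].
  replace (s * fst a + (1 - s) * fst b - fst z)
    with (s * (fst a - fst z) + (1 - s) * (fst b - fst z)) by ring.
  replace (s * snd a + (1 - s) * snd b - snd z)
    with (s * (snd a - snd z) + (1 - s) * (snd b - snd z)) by ring.
  assert (Hhom : forall t u v, 0 <= t -> sqrt ((t * u)^2 + (t * v)^2) = t * sqrt (u^2 + v^2)).
  { intros t u v Ht.
    replace ((t * u)^2 + (t * v)^2) with (t^2 * (u^2 + v^2)) by ring.
    rewrite sqrt_mult, sqrt_pow2 by nra. reflexivity. }
  rewrite <- !Hhom by lra. apply norm2_triangle.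
Qed.

Lemma cross_n_swap ci cj d : cross_n cj ci d = - cross_n ci cj d.
Proof. unfold cross_n; ring. Qed.

(* The point [ci + (al e - h e^perp) / D], with [e = cj - ci], [D = |e|],
   [al = (D^2 + R1^2 - R2^2) / 2D] and [h = sqrt (R1^2 - al^2)]. *)
Lemma circles_meet (ci cj : pt) R1 R2 :
  0 < pdist ci cj -> 0 <= R1 -> 0 <= R2 ->
  R1 - R2 <= pdist ci cj -> R2 - R1 <= pdist ci cj -> pdist ci cj <= R1 + R2 ->
  exists q, pdist q ci = R1 /\ pdist q cj = R2 /\ 0 <= cross_n ci cj q.
Proof.
  intros HD H1 H2 Ha Hb Hc.
  pose proof (pdist_sqr ci cj) as HDs.
  set (D := pdist ci cj) in *. clearbody D.
  destruct ci as [x1 y1], cj as [x2 y2]. unfold sqdist in HDs; unfold cross_n; cbn [fst snd] in *.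
  set (e1 := x2 - x1). set (e2 := y2 - y1).
  assert (HE : e1^2 + e2^2 = D^2) by (rewrite HDs; unfold e1, e2; ring).
  clear HDs.
  set (al := (D^2 + R1^2 - R2^2) / (2 * D)).
  assert (Hal : al * (2 * D) = D^2 + R1^2 - R2^2) by (unfold al; field; lra).
  assert (Hh : 0 <= R1^2 - al^2).
  { assert (Hf : 4 * D^2 * (R1^2 - al^2) = (R2^2 - (D - R1)^2) * ((D + R1)^2 - R2^2))
      by (unfold al; field; lra).
    assert (0 <= (R2^2 - (D - R1)^2) * ((D + R1)^2 - R2^2)) by (apply Rmult_le_pos; nra).
    apply Rmult_le_reg_l with (4 * D^2); nra. }
  set (h := sqrt (R1^2 - al^2)).
  assert (Hh2 : h^2 = R1^2 - al^2) by (apply pow2_sqrt; auto).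
  assert (h0 : 0 <= h) by apply sqrt_pos.
  clearbody h al.
  exists (x1 + (al * e1 - h * e2) / D, y1 + (al * e2 + h * e1) / D).
  repeat split.
  - apply pdist_eq_sqdist; auto. unfold sqdist; cbn [fst snd].
    transitivity ((al^2 + h^2) * (e1^2 + e2^2) / D^2); [field; lra|].
    rewrite HE, Hh2. field; lra.
  - apply pdist_eq_sqdist; auto. unfold sqdist; cbn [fst snd].
    transitivity (((al - D)^2 + h^2) * (e1^2 + e2^2) / D^2); [unfold e1, e2; field; lra|].
    rewrite HE, Hh2. field_simplify; [nra|lra].
  - cbn [fst snd].
    replace ((x1 + (al * e1 - h * e2) / D - x1) * - e2 + (y1 + (al * e2 + h * e1) / D - y1) * e1)
      with (h * (e1^2 + e2^2) / D) by (field; lra).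
    rewrite HE. apply Rmult_le_pos; [nra|]. left; apply Rinv_0_lt_compat; lra.
Qed.

(* Lagrange's identity fixes the [e^perp]-component up to sign. *)
Lemma vec_eq_of_components u1 u2 v1 v2 e1 e2 : 0 < e1^2 + e2^2 ->
  u1^2 + u2^2 = v1^2 + v2^2 -> u1 * e1 + u2 * e2 = v1 * e1 + v2 * e2 ->
  0 <= u1 * - e2 + u2 * e1 -> 0 <= v1 * - e2 + v2 * e1 -> u1 = v1 /\ u2 = v2.
Proof.
  intros He Hlen Hpar Cu Cv.
  assert (Hperp : u1 * - e2 + u2 * e1 = v1 * - e2 + v2 * e1).
  { apply Rsqr_inj; auto; unfold Rsqr.
    replace ((u1 * - e2 + u2 * e1) * (u1 * - e2 + u2 * e1))
      with ((u1^2 + u2^2) * (e1^2 + e2^2) - (u1 * e1 + u2 * e2)^2) by ring.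
    replace ((v1 * - e2 + v2 * e1) * (v1 * - e2 + v2 * e1))
      with ((v1^2 + v2^2) * (e1^2 + e2^2) - (v1 * e1 + v2 * e2)^2) by ring.
    rewrite Hlen, Hpar; reflexivity. }
  assert (Hw : ((u1 - v1)^2 + (u2 - v2)^2) * (e1^2 + e2^2) = 0).
  { replace (((u1 - v1)^2 + (u2 - v2)^2) * (e1^2 + e2^2))
      with (((u1 - v1) * e1 + (u2 - v2) * e2)^2 + ((u1 - v1) * - e2 + (u2 - v2) * e1)^2)
      by ring.
    replace ((u1 - v1) * e1 + (u2 - v2) * e2) with 0 by lra.
    replace ((u1 - v1) * - e2 + (u2 - v2) * e1) with 0 by lra. ring. }
  apply Rmult_integral in Hw; destruct Hw as [Hw|Hw]; [|lra].
  pose proof (pow2_ge_0 (u1 - v1)); pose proof (pow2_ge_0 (u2 - v2)).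
  split; nra.
Qed.

Lemma circles_meet_unique ci cj R1 R2 q1 q2 : ci <> cj ->
  pdist q1 ci = R1 -> pdist q1 cj = R2 -> pdist q2 ci = R1 -> pdist q2 cj = R2 ->
  0 <= cross_n ci cj q1 -> 0 <= cross_n ci cj q2 -> q1 = q2.
Proof.
  intros Hne A1 A2 B1 B2 C1 C2.
  assert (HD : 0 < sqdist ci cj)
    by (rewrite <- pdist_sqr; pose proof (pdist_gt0 _ _ Hne); nra).
  assert (0 <= R1) by (rewrite <- A1; apply pdist_ge0).
  assert (0 <= R2) by (rewrite <- A2; apply pdist_ge0).
  apply pdist_eq_sqdist in A1, A2, B1, B2; auto.
  destruct ci as [x1 y1], cj as [x2 y2], q1 as [a1 a2], q2 as [b1 b2].
  unfold sqdist, cross_n in *; cbn [fst snd] in *.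
  destruct (vec_eq_of_components (a1 - x1) (a2 - y1) (b1 - x1) (b2 - y1) (x2 - x1) (y2 - y1))
    as [E1 E2]; try nra.
  f_equal; lra.
Qed.

Lemma homothety_centre ci cj ri rj : 0 <= ri -> 0 <= rj -> ri <> rj ->
  exists d, pdist d ci = pdist ci cj / Rabs (ri - rj) * ri /\
            pdist d cj = pdist ci cj / Rabs (ri - rj) * rj.
Proof.
  intros Hri Hrj Hrr.
  assert (Ha : 0 < Rabs (ri - rj)) by (apply Rabs_pos_lt; lra).
  assert (Ha2 : Rabs (ri - rj) ^ 2 = (ri - rj) ^ 2) by apply pow2_abs.
  pose proof (pdist_sqr ci cj) as HD. pose proof (pdist_ge0 ci cj).
  set (k := ri / (ri - rj)).
  exists (fst ci + k * (fst cj - fst ci), snd ci + k * (snd cj - snd ci)).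
  assert (Hq : 0 <= pdist ci cj / Rabs (ri - rj)) by (apply Rle_mult_inv_pos; lra).
  split; apply pdist_eq_sqdist; try (apply Rmult_le_pos; lra);
    unfold sqdist in *; cbn [fst snd].
  - transitivity (k^2 * pdist ci cj ^ 2); [rewrite HD; ring|].
    unfold k; field_simplify_eq; [rewrite Ha2; ring|lra].
  - transitivity ((k - 1)^2 * pdist ci cj ^ 2); [rewrite HD; ring|].
    unfold k; field_simplify_eq; [rewrite Ha2; ring|lra].
Qed.

Lemma centres_neq_of_circles_meet ci cj ri rj lam q : 0 < lam -> (ci, ri) <> (cj, rj) ->
  pdist q ci = lam * ri -> pdist q cj = lam * rj -> ci <> cj.
Proof.
  intros Hlam Hne Q1 Q2 E; subst cj; rewrite Q1 in Q2.
  apply Hne; f_equal; apply Rmult_eq_reg_l with lam; lra.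
Qed.

Section TwoDisks.
Variables (ci cj : pt) (ri rj lam : R).
Hypotheses (Hlam : 0 < lam) (Hri : 0 < ri) (Hrj : 0 < rj)
  (Hne : (ci, ri) <> (cj, rj)) (Hmeet : pdist ci cj <= lam * (ri + rj)).

Let circles_meet_at q := pdist q ci = lam * ri /\ pdist q cj = lam * rj.

Lemma nested_of_circles_apart :
  ~ (exists q, circles_meet_at q) -> pdist ci cj < lam * Rabs (ri - rj).
Proof.
  intros Hn; apply Rnot_le_lt; intros H.
  assert (Hdiff : lam * (ri - rj) <= lam * Rabs (ri - rj) /\ lam * (rj - ri) <= lam * Rabs (ri - rj)).
  { rewrite (Rabs_minus_sym ri rj) at 2.
    split; apply Rmult_le_compat_l; auto using Rle_abs; lra. }
  destruct (pdist_ge0 ci cj) as [HD|HD].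
  - destruct (circles_meet ci cj (lam * ri) (lam * rj)) as [q [Q1 [Q2 _]]]; try nra.
    apply Hn; exists q; split; auto.
  - symmetry in HD; pose proof (pdist_eq0 _ _ HD); subst cj.
    assert (Rabs (ri - rj) <= 0) by nra.
    destruct (Req_dec ri rj) as [<-|E]; [apply Hne; reflexivity|].
    assert (Hd : ri - rj <> 0) by (intros E'; apply E; lra).
    pose proof (Rabs_pos_lt _ Hd); lra.
Qed.

Lemma dij_spec_exists : exists d, dij_spec ci cj ri rj lam d.
Proof.
  destruct (classic (exists q, circles_meet_at q)) as [Hq|Hq].
  - destruct Hq as [q [Q1 Q2]].
    pose proof (pdist_gt0 _ _ (centres_neq_of_circles_meet _ _ _ _ _ _ Hlam Hne Q1 Q2)).
    pose proof (pdist_triangle ci q cj). pose proof (pdist_triangle q ci cj).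
    pose proof (pdist_triangle q cj ci).
    rewrite (pdist_sym ci q), (pdist_sym cj ci) in *.
    destruct (circles_meet ci cj (lam * ri) (lam * rj)) as [d Hd]; try nra.
    exists d; split; [auto|]. intros Hn; exfalso; apply Hn; exists q; auto.
  - pose proof (nested_of_circles_apart Hq) as Hlt.
    assert (Hrr : ri <> rj).
    { intros E; subst rj; rewrite Rminus_diag, Rabs_R0 in Hlt.
      pose proof (pdist_ge0 ci cj); lra. }
    destruct (homothety_centre ci cj ri rj) as [d Hd]; try lra.
    exists d; split; [intros Hn; contradiction|]; cbv zeta.
    replace (pdist ci cj / (lam * Rabs (ri - rj)) * lam) with (pdist ci cj / Rabs (ri - rj));
      [auto|field; split; [apply Rabs_no_R0|]; lra].
Qed.

Lemma dij_spec_in_disks d : dij_spec ci cj ri rj lam d ->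
  pdist d ci <= lam * ri /\ pdist d cj <= lam * rj.
Proof.
  intros [S1 S2].
  destruct (classic (exists q, circles_meet_at q)) as [Hq|Hq].
  - destruct (S1 Hq) as [A [B _]]; lra.
  - destruct (S2 Hq) as [A B]. pose proof (nested_of_circles_apart Hq) as Hlt.
    pose proof (pdist_ge0 ci cj).
    assert (Ha : 0 < Rabs (ri - rj)) by nra.
    assert (Hk : pdist ci cj / (lam * Rabs (ri - rj)) * lam <= lam).
    { replace (pdist ci cj / (lam * Rabs (ri - rj)) * lam) with (pdist ci cj / Rabs (ri - rj))
        by (field; lra).
      apply Rmult_le_reg_r with (Rabs (ri - rj)); auto. field_simplify; lra. }
    rewrite A, B; split; apply Rmult_le_compat_r; lra.
Qed.

End TwoDisks.

Lemma lmax_ge l x : In x l -> x <= lmax l.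
Proof.
  destruct l as [|y t]; [intros []|]; cbn [lmax].
  revert x; induction t as [|a t IH]; intros x Hx; cbn [fold_right].
  - destruct Hx as [E|[]]; subst; lra.
  - destruct Hx as [E|[E|E]]; subst.
    + eapply Rle_trans; [apply IH; left; reflexivity|apply Rmax_r].
    + apply Rmax_l.
    + eapply Rle_trans; [apply IH; right; exact E|apply Rmax_r].
Qed.

Lemma lmax_in l : l <> nil -> In (lmax l) l.
Proof.
  destruct l as [|y t]; [congruence|intros _]; cbn [lmax].
  induction t as [|a t IH]; cbn [fold_right]; [left; reflexivity|].
  destruct (Rle_dec a (fold_right Rmax y t)).
  - rewrite Rmax_right by auto; destruct IH as [E|E]; [left; auto|right; right; auto].
  - rewrite Rmax_left by lra; right; left; reflexivity.
Qed.

Lemma lmax_map_attained {A} (F : A -> R) l : l <> nil -> exists x, In x l /\ lmax (map F l) = F x.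
Proof.
  intros Hl; assert (Hin : In (lmax (map F l)) (map F l))
    by (apply lmax_in; intros E; apply Hl, (map_eq_nil _ _ E)).
  apply in_map_iff in Hin; destruct Hin as [x [E Hx]]; eauto.
Qed.

Lemma lmin_le l x : In x l -> lmin l <= x.
Proof.
  destruct l as [|y t]; [intros []|]; cbn [lmin].
  revert x; induction t as [|a t IH]; intros x Hx; cbn [fold_right].
  - destruct Hx as [E|[]]; subst; lra.
  - destruct Hx as [E|[E|E]]; subst.
    + eapply Rle_trans; [apply Rmin_r|apply IH; left; reflexivity].
    + apply Rmin_l.
    + eapply Rle_trans; [apply Rmin_r|apply IH; right; exact E].
Qed.

Lemma lmin_in l : l <> nil -> In (lmin l) l.
Proof.
  destruct l as [|y t]; [congruence|intros _]; cbn [lmin].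
  induction t as [|a t IH]; cbn [fold_right]; [left; reflexivity|].
  destruct (Rle_dec a (fold_right Rmin y t)).
  - rewrite Rmin_left by auto; right; left; reflexivity.
  - rewrite Rmin_right by lra; destruct IH as [E|E]; [left; auto|right; right; auto].
Qed.

Lemma lmin_ge0 l : (forall x, In x l -> 0 <= x) -> 0 <= lmin l.
Proof.
  destruct l as [|y t]; [intros; cbn; lra|intros H].
  apply H, lmin_in; discriminate.
Qed.

Lemma lmax_map_lip {A} (l : list A) (F G : A -> R) e : 0 <= e ->
  (forall a, In a l -> G a - F a <= e) -> lmax (map G l) - lmax (map F l) <= e.
Proof.
  intros He H; destruct l as [|a0 l]; cbn [map lmax]; [lra|].
  assert (H0 : G a0 - F a0 <= e) by (apply H; left; auto).
  assert (Hl : forall a, In a l -> G a - F a <= e) by (intros; apply H; right; auto).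
  clear H; induction l as [|a l IH]; cbn [map fold_right]; auto.
  assert (G a - F a <= e) by (apply Hl; left; auto).
  assert (IH' := IH (fun b Hb => Hl b (or_intror Hb))).
  set (mG := fold_right Rmax (G a0) (map G l)) in *.
  set (mF := fold_right Rmax (F a0) (map F l)) in *.
  unfold Rmax; destruct (Rle_dec (G a) mG), (Rle_dec (F a) mF); lra.
Qed.

Lemma continuity_Rmin f g : continuity f -> continuity g -> continuity (fun t => Rmin (f t) (g t)).
Proof.
  intros Hf Hg x.
  apply continuity_pt_locally_ext with (fun t => ((f t + g t) - Rabs (f t - g t)) / 2) 1; [lra| |].
  { intros t _; unfold Rmin, Rabs; destruct (Rle_dec _ _), (Rcase_abs _); lra. }
  apply continuity_pt_div; [|apply continuity_pt_const; intros ? ?; auto|lra].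
  apply continuity_pt_minus; [apply continuity_pt_plus; auto|].
  apply (continuity_pt_comp (fun t => f t - g t)); [apply continuity_pt_minus; auto|].
  apply Rcontinuity_abs.
Qed.

Lemma continuity_lmin_map {A} (l : list A) (g : A -> R -> R) :
  (forall a, continuity (g a)) -> continuity (fun t => lmin (map (fun a => g a t) l)).
Proof.
  intros Hg; destruct l as [|a0 l]; cbn [map lmin].
  - intros x; apply continuity_pt_const; intros ? ?; auto.
  - induction l as [|a l IH]; cbn [map fold_right]; auto using continuity_Rmin.
Qed.

Lemma continuity_pdist (P : R -> pt) (q : pt) :
  continuity (fun t => fst (P t)) -> continuity (fun t => snd (P t)) ->
  continuity (fun t => pdist (P t) q).
Proof.
  intros H1 H2 x; unfold pdist.
  assert (K : forall a, continuity_pt (fun _ => a) x)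
    by (intros; apply continuity_pt_const; intros ? ?; auto).
  apply (continuity_pt_comp (fun t => (fst (P t) - fst q)^2 + (snd (P t) - snd q)^2) sqrt).
  - apply continuity_pt_plus; cbn [pow];
      repeat apply continuity_pt_mult; auto; apply continuity_pt_minus; auto.
  - apply continuity_pt_sqrt; pose proof (pow2_ge_0 (fst (P x) - fst q));
      pose proof (pow2_ge_0 (snd (P x) - snd q)); lra.
Qed.

Lemma lipschitz_continuity (g : R -> R) L : 0 <= L ->
  (forall x y, g y - g x <= L * Rabs (y - x)) -> continuity g.
Proof.
  intros HL H x eps Heps.
  exists (eps / (L + 1)); split; [apply Rdiv_lt_0_compat; lra|].
  intros y [_ Hy]; cbn [dist R_met] in *; unfold Rdist in *.
  assert (Habs : Rabs (g y - g x) <= L * Rabs (y - x)).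
  { apply Rabs_le; split; [|apply H].
    pose proof (H y x) as Hyx; rewrite (Rabs_minus_sym x y) in Hyx; lra. }
  assert (Hy' : (L + 1) * Rabs (y - x) < eps).
  { apply Rmult_lt_reg_r with (/ (L + 1)); [apply Rinv_0_lt_compat; lra|].
    replace ((L + 1) * Rabs (y - x) * / (L + 1)) with (Rabs (y - x)) by (field; lra); exact Hy. }
  pose proof (Rabs_pos (y - x)); nra.
Qed.

Definition circle_point (ci : pt) (w1 w2 th : R) : pt :=
  (fst ci + (w1 * cos th - w2 * sin th), snd ci + (w1 * sin th + w2 * cos th)).

Lemma circle_point_sqdist ci w1 w2 th : sqdist (circle_point ci w1 w2 th) ci = w1^2 + w2^2.
Proof.
  unfold sqdist, circle_point; cbn [fst snd].
  pose proof (sin2_cos2 th) as H; unfold Rsqr in H.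
  transitivity ((w1^2 + w2^2) * (sin th * sin th + cos th * cos th)); [ring|].
  rewrite H; ring.
Qed.

Lemma circle_point_0 ci w1 w2 : circle_point ci w1 w2 0 = (fst ci + w1, snd ci + w2).
Proof. unfold circle_point; rewrite cos_0, sin_0; f_equal; ring. Qed.

Lemma continuity_circle_point ci w1 w2 :
  continuity (fun t => fst (circle_point ci w1 w2 t)) /\
  continuity (fun t => snd (circle_point ci w1 w2 t)).
Proof.
  assert (K : forall a x, continuity_pt (fun _ => a) x)
    by (intros; apply continuity_pt_const; intros ? ?; auto).
  unfold circle_point; cbn [fst snd]; split; intros x;
    repeat first [apply continuity_pt_minus | apply continuity_pt_plus | apply continuity_pt_mult
                 | apply K | apply continuity_cos | apply continuity_sin].
Qed.

Lemma cos_sin_surj C S : C^2 + S^2 = 1 -> exists th, cos th = C /\ sin th = S.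
Proof.
  intros H.
  assert (HC : -1 <= C <= 1) by (pose proof (pow2_ge_0 S); split; nra).
  assert (Hs : sqrt (1 - C²) = Rabs S).
  { rewrite <- (sqrt_pow2 (Rabs S)) by apply Rabs_pos; f_equal.
    rewrite pow2_abs; unfold Rsqr; lra. }
  destruct (Rle_dec 0 S).
  - exists (acos C); rewrite cos_acos, sin_acos, Hs, Rabs_right by lra; auto.
  - exists (- acos C); rewrite cos_neg, sin_neg, cos_acos, sin_acos, Hs, Rabs_left by lra.
    split; [auto|ring].
Qed.

Lemma rotation_exists w1 w2 e1 e2 : 0 < w1^2 + w2^2 -> e1^2 + e2^2 = w1^2 + w2^2 ->
  exists th, w1 * cos th - w2 * sin th = e1 /\ w1 * sin th + w2 * cos th = e2.
Proof.
  intros HN He; set (N := w1^2 + w2^2) in *.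
  destruct (cos_sin_surj ((w1 * e1 + w2 * e2) / N) ((w1 * e2 - w2 * e1) / N)) as [th [Hc Hs]].
  { transitivity ((w1^2 + w2^2) * (e1^2 + e2^2) / N^2); [field; lra|].
    rewrite He; fold N; field; lra. }
  exists th; rewrite Hc, Hs; split.
  - transitivity (e1 * (w1^2 + w2^2) / N); [field; lra|fold N; field; lra].
  - transitivity (e2 * (w1^2 + w2^2) / N); [field; lra|fold N; field; lra].
Qed.

Lemma disk_point_on_diameter ci x N : 0 < N -> sqdist x ci <= N ->
  exists e1 e2 s, e1^2 + e2^2 = N /\ 0 <= s <= 1 /\
    x = (s * (fst ci + e1) + (1 - s) * (fst ci - e1), s * (snd ci + e2) + (1 - s) * (snd ci - e2)).
Proof.
  intros HN Hx.
  pose proof (pdist_sqr x ci) as Hrho. pose proof (pdist_ge0 x ci) as rho0.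
  set (rho := pdist x ci) in *.
  assert (HsN : sqrt N ^ 2 = N) by (apply pow2_sqrt; lra).
  assert (sN0 : 0 < sqrt N) by (apply sqrt_lt_R0; lra).
  assert (Hrs : rho <= sqrt N) by (apply Rsqr_incr_0_var; unfold Rsqr; nra).
  destruct (Req_dec rho 0) as [Hz|Hz].
  - apply pdist_eq0 in Hz; subst x.
    exists (sqrt N), 0, (1/2); repeat split; try lra.
    rewrite (surjective_pairing ci) at 1; f_equal; field.
  - set (k := sqrt N / rho).
    exists (k * (fst x - fst ci)), (k * (snd x - snd ci)), ((1 + rho / sqrt N) / 2).
    assert (Hq : 0 <= rho / sqrt N <= 1).
    { split; [apply Rle_mult_inv_pos; lra|].
      apply Rmult_le_reg_r with (sqrt N); auto; field_simplify; lra. }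
    repeat split; try lra.
    + transitivity (k^2 * sqdist x ci); [unfold sqdist; ring|].
      rewrite <- Hrho; unfold k; field_simplify; [rewrite HsN; field|]; lra.
    + rewrite (surjective_pairing x) at 1; unfold k; f_equal; field; lra.
Qed.

Lemma disk_in_of_circle_in (ci z : pt) (w1 w2 Rz : R) : 0 < w1^2 + w2^2 ->
  (forall th, pdist (circle_point ci w1 w2 th) z <= Rz) ->
  forall x, sqdist x ci <= w1^2 + w2^2 -> pdist x z <= Rz.
Proof.
  intros HN Hcirc x Hx.
  destruct (disk_point_on_diameter ci x (w1^2 + w2^2) HN Hx) as [e1 [e2 [s [He [Hs Ex]]]]].
  destruct (rotation_exists w1 w2 e1 e2) as [th1 [A1 A2]]; auto.
  destruct (rotation_exists w1 w2 (- e1) (- e2)) as [th2 [B1 B2]]; [auto|lra|].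
  pose proof (Hcirc th1) as H1. pose proof (Hcirc th2) as H2.
  unfold circle_point in H1, H2; rewrite A1, A2 in H1; rewrite B1, B2 in H2.
  pose proof (pdist_convex (fst ci + e1, snd ci + e2) (fst ci + - e1, snd ci + - e2) z s Hs) as Hc.
  cbn [fst snd] in Hc.
  replace (fst ci + - e1) with (fst ci - e1) in * by ring.
  replace (snd ci + - e2) with (snd ci - e2) in * by ring.
  rewrite <- Ex in Hc; nra.
Qed.

Lemma In_idx_pairs m i j : In (i, j) (idx_pairs m) <-> (i < m /\ j < m /\ i <> j)%nat.
Proof.
  unfold idx_pairs; rewrite in_flat_map; split.
  - intros [x [Hx Hin]]; apply in_map_iff in Hin; destruct Hin as [y [E Hy]].
    injection E as <- <-; apply filter_In in Hy; destruct Hy as [Hy Hb].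
    apply in_seq in Hx, Hy; apply Bool.negb_true_iff, Nat.eqb_neq in Hb; lia.
  - intros (Hi & Hj & Hij); exists i; split; [apply in_seq; lia|].
    apply in_map_iff; exists j; split; auto; apply filter_In; split; [apply in_seq; lia|].
    apply Bool.negb_true_iff, Nat.eqb_neq; auto.
Qed.

Section Slack.
Variables (c : nat -> pt) (r : nat -> R) (lam : R).

Definition slack (L : list nat) (p : pt) : R :=
  lmin (map (fun k => lam * r k - pdist p (c k)) L).

Lemma slack_ge0 L p : (forall k, In k L -> pdist p (c k) <= lam * r k) -> 0 <= slack L p.
Proof.
  intros H; apply lmin_ge0; intros x Hx; apply in_map_iff in Hx.
  destruct Hx as [k [<- Hk]]; specialize (H k Hk); lra.
Qed.

Lemma slack_le L p k : In k L -> slack L p <= lam * r k - pdist p (c k).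
Proof. intros Hk; apply lmin_le, (in_map (fun k => lam * r k - pdist p (c k))), Hk. Qed.

Lemma continuity_slack L (P : R -> pt) :
  continuity (fun t => fst (P t)) -> continuity (fun t => snd (P t)) ->
  continuity (fun t => slack L (P t)).
Proof.
  intros H1 H2; apply continuity_lmin_map; intros k x.
  apply continuity_pt_minus; [apply continuity_pt_const; intros ? ?; auto|].
  apply continuity_pdist; auto.
Qed.

Lemma exit_point L (P : R -> pt) t1 : L <> nil ->
  continuity (fun t => fst (P t)) -> continuity (fun t => snd (P t)) ->
  0 <= slack L (P 0) -> slack L (P t1) < 0 ->
  exists z k, In k L /\ pdist (P z) (c k) = lam * r k /\
    forall l, In l L -> pdist (P z) (c l) <= lam * r l.
Proof.
  intros HL H1 H2 H0 Ht1.
  pose proof (continuity_slack L P H1 H2) as HG.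
  assert (Hz : exists z, slack L (P z) = 0).
  { destruct (Rle_dec 0 t1).
    - destruct (IVT_cor _ 0 t1 HG) as [z [_ Hz]]; [lra|nra|eauto].
    - destruct (IVT_cor _ t1 0 HG) as [z [_ Hz]]; [lra|nra|eauto]. }
  destruct Hz as [z Hz].
  assert (Hnil : map (fun k => lam * r k - pdist (P z) (c k)) L <> nil)
    by (destruct L; [congruence|discriminate]).
  pose proof (lmin_in _ Hnil) as Hin; fold (slack L (P z)) in Hin; rewrite Hz in Hin.
  apply in_map_iff in Hin; destruct Hin as [k [Ek Hk]].
  exists z, k; repeat split; [auto|lra|].
  intros l Hl; pose proof (slack_le L (P z) l Hl); lra.
Qed.

End Slack.

Section CommonPoint.
Variables (m : nat) (c : nat -> pt) (r : nat -> R) (lam : R).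
Hypotheses (Hm : (2 <= m)%nat) (Hr : forall i, (i < m)%nat -> 0 < r i)
  (Hne : forall i j, (i < m)%nat -> (j < m)%nat -> i <> j -> (c i, r i) <> (c j, r j))
  (Hlam : 0 < lam)
  (Hpair : forall i j, (i < m)%nat -> (j < m)%nat -> i <> j ->
     pdist (c i) (c j) <= lam * (r i + r j)).

Definition in_all_disks (p : pt) : Prop :=
  forall k, (k < m)%nat -> pdist p (c k) <= lam * r k.

Definition others (i j : nat) : list nat :=
  filter (fun k => andb (negb (Nat.eqb k i)) (negb (Nat.eqb k j))) (seq 0 m).

Lemma In_others i j k : In k (others i j) <-> (k < m /\ k <> i /\ k <> j)%nat.
Proof.
  unfold others; rewrite filter_In, in_seq, Bool.andb_true_iff, !Bool.negb_true_iff, !Nat.eqb_neq.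
  lia.
Qed.

Definition pair_slack (ij : nat * nat) : R :=
  slack c r lam (others (fst ij) (snd ij)) (dij c r lam (fst ij) (snd ij)).

Lemma rhoM_slack : rhoM m c r lam = lmax (map pair_slack (idx_pairs m)).
Proof. reflexivity. Qed.

Lemma dij_specP i j : (i < m)%nat -> (j < m)%nat -> i <> j ->
  dij_spec (c i) (c j) (r i) (r j) lam (dij c r lam i j).
Proof. intros; unfold dij; apply epsilon_spec, dij_spec_exists; auto. Qed.

Lemma dij_in_disks i j : (i < m)%nat -> (j < m)%nat -> i <> j ->
  pdist (dij c r lam i j) (c i) <= lam * r i /\ pdist (dij c r lam i j) (c j) <= lam * r j.
Proof. intros; eapply dij_spec_in_disks, dij_specP; eauto. Qed.

Lemma circles_meet_dij i k q : (i < m)%nat -> (k < m)%nat -> i <> k ->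
  pdist q (c i) = lam * r i -> pdist q (c k) = lam * r k ->
  q = dij c r lam i k \/ q = dij c r lam k i.
Proof.
  intros Hi Hk Hik Q1 Q2.
  pose proof (centres_neq_of_circles_meet _ _ _ _ _ _ Hlam (Hne i k Hi Hk Hik) Q1 Q2) as Hcc.
  destruct (Rle_dec 0 (cross_n (c i) (c k) q)) as [Hc|Hc]; [left|right].
  - destruct (proj1 (dij_specP i k Hi Hk Hik) (ex_intro _ q (conj Q1 Q2))) as (D1 & D2 & D3).
    apply (circles_meet_unique (c i) (c k) (lam * r i) (lam * r k)); auto.
  - destruct (proj1 (dij_specP k i Hk Hi (not_eq_sym Hik)) (ex_intro _ q (conj Q2 Q1)))
      as (D1 & D2 & D3).
    apply (circles_meet_unique (c k) (c i) (lam * r k) (lam * r i)); auto.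
    rewrite cross_n_swap; lra.
Qed.

Lemma rhoM_ge0_of_pair i j : (i < m)%nat -> (j < m)%nat -> i <> j ->
  in_all_disks (dij c r lam i j) -> 0 <= rhoM m c r lam.
Proof.
  intros Hi Hj Hij H; rewrite rhoM_slack.
  eapply Rle_trans; [|apply lmax_ge, (in_map _ _ (i, j)), In_idx_pairs; auto].
  apply slack_ge0; intros k Hk; apply In_others in Hk; apply H; tauto.
Qed.

Lemma rhoM_ge0_of_two_circles i k q : (i < m)%nat -> (k < m)%nat -> i <> k ->
  pdist q (c i) = lam * r i -> pdist q (c k) = lam * r k -> in_all_disks q ->
  0 <= rhoM m c r lam.
Proof.
  intros Hi Hk Hik Q1 Q2 Hq.
  destruct (circles_meet_dij i k q) as [-> | ->]; auto.
  - apply (rhoM_ge0_of_pair i k); auto.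
  - apply (rhoM_ge0_of_pair k i); auto.
Qed.

Lemma common_point_of_rhoM_ge0 : 0 <= rhoM m c r lam -> exists p, in_all_disks p.
Proof.
  rewrite rhoM_slack; intros H.
  assert (Hnil : idx_pairs m <> nil)
    by (intros E; pose proof (proj2 (In_idx_pairs m 0 1) ltac:(lia)); rewrite E in *; auto).
  destruct (lmax_map_attained pair_slack _ Hnil) as [[i j] [Hij E]].
  rewrite E in H; unfold pair_slack in H; cbn [fst snd] in H.
  apply In_idx_pairs in Hij; destruct Hij as (Hi & Hj & Hij).
  exists (dij c r lam i j); intros k Hk.
  destruct (Nat.eq_dec k i) as [->|]; [apply dij_in_disks; auto|].
  destruct (Nat.eq_dec k j) as [->|]; [apply dij_in_disks; auto|].
  pose proof (slack_le c r lam (others i j) (dij c r lam i j) k ltac:(apply In_others; auto)).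
  lra.
Qed.

Lemma boundary_common_point p : in_all_disks p ->
  exists i q, (i < m)%nat /\ pdist q (c i) = lam * r i /\ in_all_disks q.
Proof.
  intros Hp.
  set (P := fun t : R => (fst p + t, snd p)).
  set (T := Rabs (fst p - fst (c 0%nat)) + lam * r 0%nat + 1).
  assert (Hin : forall k, In k (seq 0 m) <-> (k < m)%nat) by (intros; rewrite in_seq; lia).
  assert (HP : continuity (fun t => fst (P t)) /\ continuity (fun t => snd (P t))).
  { unfold P; cbn [fst snd]; split; intros x.
    - apply continuity_pt_plus; [apply continuity_pt_const; intros ? ?; auto|].
      apply derivable_continuous_pt, derivable_pt_id.
    - apply continuity_pt_const; intros ? ?; auto. }
  assert (H0 : 0 <= slack c r lam (seq 0 m) (P 0)).
  { apply slack_ge0; intros k Hk; unfold P; rewrite Rplus_0_r, <- surjective_pairing.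
    apply Hp, Hin, Hk. }
  assert (HT : slack c r lam (seq 0 m) (P T) < 0).
  { eapply Rle_lt_trans; [apply (slack_le c r lam _ _ 0%nat), Hin; lia|].
    pose proof (pdist_ge_abs_fst (P T) (c 0%nat)); pose proof (Rle_abs (fst (P T) - fst (c 0%nat))).
    pose proof (Rabs_minus_sym (fst p) (fst (c 0%nat))); pose proof (Rle_abs (fst (c 0%nat) - fst p)).
    unfold P, T in *; cbn [fst] in *; lra. }
  destruct (exit_point c r lam (seq 0 m) P T) as (z & i & Hi & Hz & Hall);
    try tauto; [destruct m; [lia|discriminate]|].
  exists i, (P z); repeat split; [apply Hin; auto|auto|].
  intros k Hk; apply Hall, Hin, Hk.
Qed.

Lemma rhoM_ge0_of_boundary_common_point i q : (i < m)%nat ->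
  pdist q (c i) = lam * r i -> in_all_disks q -> 0 <= rhoM m c r lam.
Proof.
  intros Hi Hq Hall.
  set (w1 := fst q - fst (c i)). set (w2 := snd q - snd (c i)).
  assert (HN : w1^2 + w2^2 = (lam * r i)^2) by (rewrite <- Hq, pdist_sqr; reflexivity).
  assert (Hri : 0 < r i) by auto.
  assert (HNp : 0 < w1^2 + w2^2) by (rewrite HN; apply pow_lt; nra).
  set (P := circle_point (c i) w1 w2).
  assert (Hcirc : forall th, pdist (P th) (c i) = lam * r i)
    by (intros th; apply pdist_eq_sqdist; [nra|]; unfold P; rewrite circle_point_sqdist; auto).
  assert (HP0 : P 0 = q).
  { unfold P; rewrite circle_point_0; unfold w1, w2.
    rewrite (surjective_pairing q) at 3; f_equal; ring. }
  set (L := others i i).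
  set (k0 := if Nat.eqb i 0 then 1%nat else 0%nat).
  assert (Hk0 : (k0 < m /\ k0 <> i)%nat) by (unfold k0; destruct (Nat.eqb_spec i 0); lia).
  assert (HL : L <> nil)
    by (intros E; assert (Hk : In k0 L) by (apply In_others; tauto); rewrite E in Hk; auto).
  destruct (classic (exists th, slack c r lam L (P th) < 0)) as [[th Hth]|Hin].
  - assert (H0 : 0 <= slack c r lam L (P 0))
      by (rewrite HP0; apply slack_ge0; intros k Hk; apply In_others in Hk; apply Hall; tauto).
    destruct (exit_point c r lam L P th) as (z & k & Hk & Hz & Hzall);
      try apply continuity_circle_point; auto.
    apply In_others in Hk; destruct Hk as (Hk & Hki & _).
    apply (rhoM_ge0_of_two_circles i k (P z)); auto.
    intros l Hl; destruct (Nat.eq_dec l i) as [->|]; [rewrite Hcirc; lra|].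
    apply Hzall, In_others; auto.
  - assert (Hdisk : forall l, (l < m)%nat -> l <> i -> forall th, pdist (P th) (c l) <= lam * r l).
    { intros l Hl Hli th.
      assert (0 <= slack c r lam L (P th)) by (apply Rnot_lt_le; intros H; apply Hin; eauto).
      pose proof (slack_le c r lam L (P th) l ltac:(apply In_others; auto)); lra. }
    destruct Hk0 as [Hk0 Hk0i].
    apply (rhoM_ge0_of_pair i k0); auto.
    pose proof (dij_in_disks i k0 Hi Hk0 (not_eq_sym Hk0i)) as [Di _].
    intros l Hl; destruct (Nat.eq_dec l i) as [->|]; auto.
    apply (disk_in_of_circle_in (c i) (c l) w1 w2); auto.
    rewrite HN, <- pdist_sqr; pose proof (pdist_ge0 (dij c r lam i k0) (c i)); nra.
Qed.

Theorem common_point_iff_rhoM_ge0 : (exists p, in_all_disks p) <-> 0 <= rhoM m c r lam.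
Proof.
  split; [|apply common_point_of_rhoM_ge0].
  intros [p Hp]; destruct (boundary_common_point p Hp) as (i & q & Hi & Hq & Hall).
  eapply rhoM_ge0_of_boundary_common_point; eauto.
Qed.

End CommonPoint.

(* Minimise first in [y] for each [x], then in [x]; the partial minimum is
   continuous in [x] because [F] is uniformly Lipschitz in [x]. *)
Lemma square_minimizer (F : R -> R -> R) L B : 0 <= L -> 0 <= B ->
  (forall x, continuity (F x)) -> (forall x x' y, F x' y - F x y <= L * Rabs (x' - x)) ->
  exists xs ys, forall x y, -B <= x <= B -> -B <= y <= B -> F xs ys <= F x y.
Proof.
  intros HL HB Hcont Hlip.
  set (Py := fun x y => -B <= y <= B /\ forall y', -B <= y' <= B -> F x y <= F x y').
  assert (HPy : forall x, exists y, Py x y).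
  { intros x; destruct (continuity_ab_min (F x) (-B) B) as [y H]; [lra|intros; apply Hcont|].
    exists y; split; apply H. }
  set (ys := fun x => epsilon (inhabits 0) (Py x)).
  assert (Hys : forall x, Py x (ys x)) by (intros; apply epsilon_spec; auto).
  set (G := fun x => F x (ys x)).
  assert (HG : continuity G).
  { apply lipschitz_continuity with L; auto; intros x x'; unfold G.
    pose proof (proj2 (Hys x') (ys x) (proj1 (Hys x))). pose proof (Hlip x x' (ys x)). lra. }
  destruct (continuity_ab_min G (-B) B) as [xs [Hxs _]]; [lra|intros; apply HG|].
  exists xs, (ys xs); intros x y Hx Hy.
  apply Rle_trans with (G x); [apply Hxs; auto|apply (proj2 (Hys x)); auto].
Qed.

Section RatioMax.
Variables (m : nat) (c : nat -> pt) (r : nat -> R).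
Hypotheses (Hm : (1 <= m)%nat) (Hr : forall i, (i < m)%nat -> 0 < r i).

Definition ratio_max (p : pt) : R := lmax (map (fun i => pdist p (c i) / r i) (seq 0 m)).

Lemma ratio_max_ge i p : (i < m)%nat -> pdist p (c i) <= ratio_max p * r i.
Proof.
  intros Hi; pose proof (Hr i Hi).
  assert (pdist p (c i) / r i <= ratio_max p)
    by (apply lmax_ge, (in_map (fun i => pdist p (c i) / r i)), in_seq; lia).
  apply Rmult_le_reg_r with (/ r i); [apply Rinv_0_lt_compat; auto|].
  replace (ratio_max p * r i * / r i) with (ratio_max p) by (field; lra); auto.
Qed.

Lemma ratio_max_lt p mu : (forall i, (i < m)%nat -> pdist p (c i) < mu * r i) -> ratio_max p < mu.
Proof.
  intros H; unfold ratio_max.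
  destruct (lmax_map_attained (fun i => pdist p (c i) / r i) (seq 0 m)) as [i [Hi ->]];
    [destruct m; [lia|discriminate]|].
  apply in_seq in Hi; pose proof (Hr i ltac:(lia)); pose proof (H i ltac:(lia)).
  apply Rmult_lt_reg_r with (r i); auto.
  replace (pdist p (c i) / r i * r i) with (pdist p (c i)) by (field; lra); auto.
Qed.

Definition inv_radius_max : R := lmax (map (fun i => / r i) (seq 0 m)).

Lemma inv_radius_max_ge i : (i < m)%nat -> / r i <= inv_radius_max.
Proof. intros Hi; apply lmax_ge, (in_map (fun i => / r i)), in_seq; lia. Qed.

Lemma inv_radius_max_ge0 : 0 <= inv_radius_max.
Proof.
  eapply Rle_trans; [|apply (inv_radius_max_ge 0); lia].
  left; apply Rinv_0_lt_compat, Hr; lia.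
Qed.

Lemma ratio_max_lipschitz p q : ratio_max q - ratio_max p <= inv_radius_max * pdist q p.
Proof.
  apply lmax_map_lip; [apply Rmult_le_pos; auto using inv_radius_max_ge0, pdist_ge0|].
  intros i Hi; apply in_seq in Hi.
  pose proof (Hr i ltac:(lia)); pose proof (inv_radius_max_ge i ltac:(lia)).
  pose proof (pdist_triangle q p (c i)); pose proof (pdist_ge0 q p).
  assert (0 < / r i) by (apply Rinv_0_lt_compat; auto).
  unfold Rdiv; nra.
Qed.

Lemma pdist_fst_shift x x' y : pdist (x', y) (x, y) = Rabs (x' - x).
Proof.
  apply pdist_eq_sqdist; [apply Rabs_pos|]; unfold sqdist; cbn [fst snd]; rewrite pow2_abs; ring.
Qed.

Lemma pdist_snd_shift x y y' : pdist (x, y') (x, y) = Rabs (y' - y).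
Proof.
  apply pdist_eq_sqdist; [apply Rabs_pos|]; unfold sqdist; cbn [fst snd]; rewrite pow2_abs; ring.
Qed.

Lemma ratio_max_minimizer : exists ps, forall q, ratio_max ps <= ratio_max q.
Proof.
  assert (Hr0 : 0 < r 0%nat) by (apply Hr; lia).
  set (F := fun x y => ratio_max (x, y)).
  assert (Hcont : forall x, continuity (F x)).
  { intros x; apply lipschitz_continuity with inv_radius_max; [apply inv_radius_max_ge0|].
    intros y y'; unfold F; rewrite <- (pdist_snd_shift x); apply ratio_max_lipschitz. }
  assert (Hlip : forall x x' y, F x' y - F x y <= inv_radius_max * Rabs (x' - x))
    by (intros x x' y; unfold F; rewrite <- (pdist_fst_shift x x' y); apply ratio_max_lipschitz).
  (* Outside the square [[-B, B]^2], [ratio_max] exceeds its value at the origin. *)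
  set (f00 := ratio_max (0, 0)).
  assert (Hf00 : 0 <= f00) by (unfold f00; pose proof (ratio_max_ge 0 (0, 0) ltac:(lia));
                               pose proof (pdist_ge0 (0, 0) (c 0%nat)); nra).
  set (B := Rabs (fst (c 0%nat)) + Rabs (snd (c 0%nat)) + r 0%nat * (f00 + 1)).
  pose proof (Rabs_pos (fst (c 0%nat))); pose proof (Rabs_pos (snd (c 0%nat))).
  assert (HB : 0 <= B) by (unfold B; nra).
  destruct (square_minimizer F inv_radius_max B inv_radius_max_ge0 HB Hcont Hlip)
    as (xs & ys & Hmin).
  exists (xs, ys); intros q.
  destruct (Rle_dec (Rabs (fst q)) B) as [Q1|Q1]; [destruct (Rle_dec (Rabs (snd q)) B) as [Q2|Q2]|].
  - assert (Hbox : forall x, Rabs x <= B -> -B <= x <= B)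
      by (intros x Hx; pose proof (Rle_abs x); pose proof (Rle_abs (- x));
          rewrite Rabs_Ropp in *; lra).
    rewrite (surjective_pairing q); apply Hmin; apply Hbox; auto.
  - apply Rle_trans with f00; [apply Hmin; lra|].
    pose proof (ratio_max_ge 0 q ltac:(lia)); pose proof (pdist_ge_abs_snd q (c 0%nat)).
    pose proof (Rabs_triang_inv (snd q) (snd (c 0%nat))); unfold B in Q2; nra.
  - apply Rle_trans with f00; [apply Hmin; lra|].
    pose proof (ratio_max_ge 0 q ltac:(lia)); pose proof (pdist_ge_abs_fst q (c 0%nat)).
    pose proof (Rabs_triang_inv (fst q) (fst (c 0%nat))); unfold B in Q1; nra.
Qed.

End RatioMax.

Lemma small_steps_all (P : nat -> R -> Prop) n :
  (forall s, (s < n)%nat -> exists d, 0 < d /\ forall t, 0 < t < d -> P s t) ->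
  exists d, 0 < d /\ forall t, 0 < t < d -> forall s, (s < n)%nat -> P s t.
Proof.
  induction n as [|n IH]; intros H.
  - exists 1; split; [lra|intros; lia].
  - destruct IH as [d1 [Hd1 H1]]; [intros s Hs; apply H; lia|].
    destruct (H n) as [d2 [Hd2 H2]]; [lia|].
    exists (Rmin d1 d2); split; [apply Rmin_glb_lt; auto|].
    intros t Ht s Hs; pose proof (Rmin_l d1 d2); pose proof (Rmin_r d1 d2).
    destruct (Nat.eq_dec s n) as [->|]; [apply H2; lra|apply H1; [lra|lia]].
Qed.

Lemma step_into_disk u1 u2 v1 v2 R : 0 <= R -> u1^2 + u2^2 <= R^2 ->
  (u1^2 + u2^2 = R^2 -> u1 * v1 + u2 * v2 < 0) ->
  exists d, 0 < d /\ forall t, 0 < t < d -> (u1 + t * v1)^2 + (u2 + t * v2)^2 < R^2.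
Proof.
  intros HR Hle Hin.
  set (N := u1^2 + u2^2) in *. set (D := u1 * v1 + u2 * v2) in *. set (V := v1^2 + v2^2).
  assert (HV : 0 <= V) by (unfold V; nra).
  assert (Hexp : forall t, (u1 + t * v1)^2 + (u2 + t * v2)^2 = N + t * (2 * D + t * V))
    by (intros; unfold N, D, V; ring).
  destruct (Req_dec N (R^2)) as [HN|HN].
  - specialize (Hin HN).
    exists (- D / (V + 1)); split; [apply Rdiv_lt_0_compat; lra|].
    intros t [Ht1 Ht2]; rewrite Hexp.
    assert (t * (V + 1) < - D).
    { apply Rmult_lt_reg_r with (/ (V + 1)); [apply Rinv_0_lt_compat; lra|].
      replace (t * (V + 1) * / (V + 1)) with t by (field; lra); auto. }
    nra.
  - set (K := 2 * Rabs D + V + 1).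
    assert (HK : 0 < K) by (unfold K; pose proof (Rabs_pos D); lra).
    exists (Rmin 1 ((R^2 - N) / K)); split.
    { apply Rmin_glb_lt; [lra|apply Rdiv_lt_0_compat; lra]. }
    intros t [Ht1 Ht2]; rewrite Hexp.
    pose proof (Rmin_l 1 ((R^2 - N) / K)); pose proof (Rmin_r 1 ((R^2 - N) / K)).
    assert (t * K < R^2 - N).
    { apply Rmult_lt_reg_r with (/ K); [apply Rinv_0_lt_compat; lra|].
      replace (t * K * / K) with t by (field; lra); unfold Rdiv in *; lra. }
    assert (t * (2 * D + t * V) <= t * K).
    { apply Rmult_le_compat_l; [lra|]; pose proof (Rle_abs D).
      assert (t * V <= V) by (rewrite <- (Rmult_1_l V) at 2; apply Rmult_le_compat_r; lra).
      unfold K; lra. }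
    lra.
Qed.

Lemma ratio_max_descent m c r ps mu v1 v2 : (1 <= m)%nat -> (forall i, (i < m)%nat -> 0 < r i) ->
  (forall s, (s < m)%nat -> pdist ps (c s) <= mu * r s) ->
  (forall s, (s < m)%nat -> pdist ps (c s) = mu * r s ->
     (fst ps - fst (c s)) * v1 + (snd ps - snd (c s)) * v2 < 0) ->
  exists q, ratio_max m c r q < mu.
Proof.
  intros Hm Hr Hle Hv.
  destruct (small_steps_all (fun s t => pdist (fst ps + t * v1, snd ps + t * v2) (c s) < mu * r s) m)
    as [d [Hd Hall]].
  - intros s Hs; pose proof (Hle s Hs); pose proof (pdist_ge0 ps (c s)).
    destruct (step_into_disk (fst ps - fst (c s)) (snd ps - snd (c s)) v1 v2 (mu * r s))
      as [d [Hd Hstep]]; [lra|apply pdist_le_sqdist; auto; lra| |].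
    + intros E; apply Hv; auto; apply pdist_eq_sqdist; auto; lra.
    + exists d; split; auto; intros t Ht; apply pdist_lt_sqdist; [lra|].
      unfold sqdist; cbn [fst snd].
      replace (fst ps + t * v1 - fst (c s)) with (fst ps - fst (c s) + t * v1) by ring.
      replace (snd ps + t * v2 - snd (c s)) with (snd ps - snd (c s) + t * v2) by ring.
      auto.
  - exists (fst ps + d / 2 * v1, snd ps + d / 2 * v2); apply ratio_max_lt; auto.
    intros i Hi; apply Hall; auto; lra.
Qed.

(* [1 + 2gpq - g^2 - p^2 - q^2] is the Gram determinant of three unit vectors with
   pairwise inner products [g], [p], [q]. *)
Lemma gram_sum_pos g p q : 1 + 2 * g * p * q - g^2 - p^2 - q^2 = 0 ->
  -1/2 < g -> g <= p -> g <= q -> 0 < p + q.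
Proof.
  intros H Hg Hp Hq; apply Rnot_le_lt; intros Hpq.
  assert (g <= 0) by lra. assert (p^2 <= g^2) by nra. assert (q^2 <= g^2) by nra.
  assert (p * q <= g^2).
  { apply Rsqr_incr_0_var; [unfold Rsqr|nra].
    replace (p * q * (p * q)) with (p^2 * q^2) by ring.
    apply Rmult_le_compat; auto; apply pow2_ge_0. }
  assert (0 < (1 + 2 * g) * (1 - g)^2) by (apply Rmult_lt_0_compat; [lra|apply pow_lt; lra]).
  nra.
Qed.

Lemma unit_vectors_sum_pos a1 a2 b1 b2 s1 s2 :
  a1^2 + a2^2 = 1 -> b1^2 + b2^2 = 1 -> s1^2 + s2^2 = 1 ->
  -1/2 < a1 * b1 + a2 * b2 -> a1 * b1 + a2 * b2 <= a1 * s1 + a2 * s2 ->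
  a1 * b1 + a2 * b2 <= b1 * s1 + b2 * s2 ->
  0 < (a1 * s1 + a2 * s2) + (b1 * s1 + b2 * s2).
Proof.
  intros Ha Hb Hs H1 H2 H3; apply gram_sum_pos with (a1 * b1 + a2 * b2); auto.
  (* plane vectors are linearly dependent, so their Gram determinant vanishes *)
  assert (E : (a1^2 + a2^2) * (b1^2 + b2^2) * (s1^2 + s2^2)
              + 2 * (a1 * b1 + a2 * b2) * (a1 * s1 + a2 * s2) * (b1 * s1 + b2 * s2)
              - (s1^2 + s2^2) * (a1 * b1 + a2 * b2)^2 - (b1^2 + b2^2) * (a1 * s1 + a2 * s2)^2
              - (a1^2 + a2^2) * (b1 * s1 + b2 * s2)^2 = 0) by ring.
  rewrite Ha, Hb, Hs in E; lra.
Qed.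

Lemma list_argmin {A} (l : list A) (F : A -> R) : l <> nil ->
  exists x, In x l /\ forall y, In y l -> F x <= F y.
Proof.
  induction l as [|a l IH]; [congruence|intros _].
  destruct l as [|b l'].
  - exists a; split; [left; auto|]; intros y [<-|[]]; lra.
  - destruct IH as [x [Hx Hmin]]; [discriminate|].
    destruct (Rle_dec (F a) (F x)).
    + exists a; split; [left; auto|]; intros y [<-|E]; [lra|specialize (Hmin y E); lra].
    + exists x; split; [right; auto|]; intros y [<-|E]; [lra|auto].
Qed.

(* Take the bisector of the pair at the widest angle. *)
Lemma open_half_plane (A : list nat) (a1 a2 : nat -> R) :
  (forall s, In s A -> a1 s ^ 2 + a2 s ^ 2 = 1) ->
  (forall i j, In i A -> In j A -> i <> j -> -1/2 < a1 i * a1 j + a2 i * a2 j) ->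
  exists v1 v2, forall s, In s A -> 0 < a1 s * v1 + a2 s * v2.
Proof.
  intros Hunit Hpair.
  set (dot := fun ij : nat * nat => a1 (fst ij) * a1 (snd ij) + a2 (fst ij) * a2 (snd ij)).
  assert (Hdot : forall i j, In i A -> In j A -> -1/2 < dot (i, j)).
  { intros i j Hi Hj; unfold dot; cbn [fst snd].
    destruct (Nat.eq_dec i j) as [<-|]; [|auto].
    specialize (Hunit i Hi); nra. }
  destruct (classic (A = nil)) as [->|HA]; [exists 0, 0; intros s []|].
  destruct (list_argmin (list_prod A A) dot) as [[i1 i2] [Hin Hmin]];
    [destruct A; [congruence|discriminate]|].
  apply in_prod_iff in Hin; destruct Hin as [A1 A2].
  exists (a1 i1 + a1 i2), (a2 i1 + a2 i2); intros s Hs.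
  assert (Hs1 : dot (i1, i2) <= dot (i1, s)) by (apply Hmin, in_prod; auto).
  assert (Hs2 : dot (i1, i2) <= dot (i2, s)) by (apply Hmin, in_prod; auto).
  pose proof (Hdot i1 i2 A1 A2) as Hp.
  unfold dot in Hs1, Hs2, Hp; cbn [fst snd] in Hs1, Hs2, Hp.
  pose proof (unit_vectors_sum_pos (a1 i1) (a2 i1) (a1 i2) (a2 i2) (a1 s) (a2 s)
                (Hunit i1 A1) (Hunit i2 A2) (Hunit s Hs) Hp Hs1 Hs2).
  lra.
Qed.

(* With [|u_i| = mu r_i], [|u_j| = mu r_j] and [|u_i - u_j| <= nu (r_i + r_j)], the
   cosine [d] of the angle between [u_i] and [u_j] exceeds [-1/2] once [mu] is large. *)
Lemma cos_gt_of_close ri rj mu nu d : 0 < ri -> 0 < rj -> 4 * nu^2 < 3 * mu^2 ->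
  mu^2 * (ri^2 + rj^2 - 2 * ri * rj * d) <= (nu * (ri + rj))^2 -> -1/2 < d.
Proof.
  intros Hri Hrj Hmu H; apply Rnot_le_lt; intros Hd.
  assert (H1 : 3 * (ri + rj)^2 <= 4 * (ri^2 + rj^2 - 2 * ri * rj * d)).
  { assert (ri * rj * 1 <= ri * rj * (- 2 * d)) by (apply Rmult_le_compat_l; nra).
    pose proof (pow2_ge_0 (ri - rj)); nra. }
  assert (H2 : 0 < (ri + rj)^2) by (apply pow_lt; lra).
  assert (3 * mu^2 * (ri + rj)^2 <= 4 * nu^2 * (ri + rj)^2).
  { apply Rle_trans with (4 * (mu^2 * (ri^2 + rj^2 - 2 * ri * rj * d))); [|nra].
    pose proof (pow2_ge_0 mu); nra. }
  nra.
Qed.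

Section Jung.
Variables (m : nat) (c : nat -> pt) (r : nat -> R) (nu : R).
Hypotheses (Hm : (1 <= m)%nat) (Hr : forall i, (i < m)%nat -> 0 < r i) (Hnu : 0 < nu)
  (Hclose : forall i j, (i < m)%nat -> (j < m)%nat -> i <> j ->
     pdist (c i) (c j) <= nu * (r i + r j)).

Section Offsets.
Variables (ps : pt) (mu : R).
Hypothesis (Hmu : 0 < mu).

Definition unit_offset (s : nat) : pt :=
  ((fst ps - fst (c s)) / (mu * r s), (snd ps - snd (c s)) / (mu * r s)).

Lemma unit_offsetE s : (s < m)%nat ->
  fst ps - fst (c s) = mu * r s * fst (unit_offset s) /\
  snd ps - snd (c s) = mu * r s * snd (unit_offset s).
Proof. intros Hs; pose proof (Hr s Hs); unfold unit_offset; cbn [fst snd]; split; field; nra. Qed.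

Lemma unit_offset_unit s : (s < m)%nat -> pdist ps (c s) = mu * r s ->
  fst (unit_offset s) ^ 2 + snd (unit_offset s) ^ 2 = 1.
Proof.
  intros Hs E; pose proof (Hr s Hs).
  apply pdist_eq_sqdist in E; [|nra]; unfold sqdist in E.
  destruct (unit_offsetE s Hs) as [E1 E2]; rewrite E1, E2 in E.
  apply Rmult_eq_reg_l with ((mu * r s)^2); [|apply pow_nonzero; nra].
  transitivity ((mu * r s * fst (unit_offset s))^2 + (mu * r s * snd (unit_offset s))^2);
    [ring|rewrite E; ring].
Qed.

Lemma unit_offset_cos_gt i j : 4 * nu^2 < 3 * mu^2 ->
  (i < m)%nat -> (j < m)%nat -> i <> j ->
  pdist ps (c i) = mu * r i -> pdist ps (c j) = mu * r j ->
  -1/2 < fst (unit_offset i) * fst (unit_offset j) + snd (unit_offset i) * snd (unit_offset j).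
Proof.
  intros Hnm Hi Hj Hij Ei Ej.
  pose proof (unit_offset_unit i Hi Ei) as Ui; pose proof (unit_offset_unit j Hj Ej) as Uj.
  pose proof (Hr i Hi); pose proof (Hr j Hj).
  apply (cos_gt_of_close (r i) (r j) mu nu); auto.
  pose proof (Hclose i j Hi Hj Hij) as Hp; apply pdist_le_sqdist in Hp; [|nra].
  unfold sqdist in Hp.
  replace (fst (c i) - fst (c j)) with ((fst ps - fst (c j)) - (fst ps - fst (c i))) in Hp by ring.
  replace (snd (c i) - snd (c j)) with ((snd ps - snd (c j)) - (snd ps - snd (c i))) in Hp by ring.
  destruct (unit_offsetE i Hi) as [Ei1 Ei2], (unit_offsetE j Hj) as [Ej1 Ej2].
  rewrite Ei1, Ei2, Ej1, Ej2 in Hp; eapply Rle_trans; [|exact Hp]; right.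
  set (a := unit_offset i) in *; set (b := unit_offset j) in *.
  transitivity (mu^2 * (r j^2 * (fst b ^ 2 + snd b ^ 2) + r i^2 * (fst a ^ 2 + snd a ^ 2)
                        - 2 * r i * r j * (fst a * fst b + snd a * snd b))); [|ring].
  rewrite Ui, Uj; ring.
Qed.

Lemma descent_direction : 4 * nu^2 < 3 * mu^2 ->
  exists v1 v2, forall s, (s < m)%nat -> pdist ps (c s) = mu * r s ->
     (fst ps - fst (c s)) * v1 + (snd ps - snd (c s)) * v2 < 0.
Proof.
  intros Hnm.
  set (active := filter (fun s => if Req_EM_T (pdist ps (c s)) (mu * r s) then true else false)
                        (seq 0 m)).
  assert (Hact : forall s, In s active <-> (s < m)%nat /\ pdist ps (c s) = mu * r s).
  { intros s; unfold active; rewrite filter_In, in_seq.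
    destruct (Req_EM_T _ _); intuition (lia || congruence). }
  destruct (open_half_plane active (fun s => fst (unit_offset s)) (fun s => snd (unit_offset s)))
    as [w1 [w2 Hw]].
  - intros s Hs; apply Hact in Hs; apply unit_offset_unit; tauto.
  - intros i j Hi Hj Hij; apply Hact in Hi, Hj; apply unit_offset_cos_gt; tauto.
  - exists (- w1), (- w2); intros s Hs Es.
    specialize (Hw s (proj2 (Hact s) (conj Hs Es))); cbn beta in Hw.
    destruct (unit_offsetE s Hs) as [-> ->]; pose proof (Hr s Hs).
    assert (0 < mu * r s) by nra.
    replace (mu * r s * fst (unit_offset s) * - w1 + mu * r s * snd (unit_offset s) * - w2)
      with (- (mu * r s) * (fst (unit_offset s) * w1 + snd (unit_offset s) * w2)) by ring.
    nra.
Qed.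

End Offsets.

Lemma jung_disks : exists p, forall i, (i < m)%nat -> pdist p (c i) <= sqrt (4 / 3) * nu * r i.
Proof.
  destruct (ratio_max_minimizer m c r Hm Hr) as [ps Hps].
  set (mu := ratio_max m c r ps).
  assert (Hle : forall i, (i < m)%nat -> pdist ps (c i) <= mu * r i)
    by (intros; apply ratio_max_ge; auto).
  assert (HJ2 : (sqrt (4 / 3) * nu) ^ 2 = 4 / 3 * nu ^ 2)
    by (rewrite Rpow_mult_distr, pow2_sqrt by lra; ring).
  assert (HJ : 0 < sqrt (4 / 3) * nu) by (apply Rmult_lt_0_compat; [apply sqrt_lt_R0; lra|auto]).
  destruct (Rle_dec mu (sqrt (4 / 3) * nu)) as [Hmu|Hmu].
  - exists ps; intros i Hi; pose proof (Hr i Hi); pose proof (Hle i Hi); nra.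
  - exfalso; apply Rnot_le_lt in Hmu.
    destruct (descent_direction ps mu) as [v1 [v2 Hv]]; [lra|nra|].
    destruct (ratio_max_descent m c r ps mu v1 v2 Hm Hr Hle Hv) as [q Hq].
    specialize (Hps q); fold mu in Hps; lra.
Qed.

End Jung.

Lemma pdist_le_nuM m c r i j : (i < m)%nat -> (j < m)%nat -> i <> j -> 0 < r i + r j ->
  pdist (c i) (c j) <= nuM m c r * (r i + r j).
Proof.
  intros Hi Hj Hij Hr.
  assert (pdist (c i) (c j) / (r i + r j) <= nuM m c r).
  { apply lmax_ge.
    apply (in_map (fun ij => pdist (c (fst ij)) (c (snd ij)) / (r (fst ij) + r (snd ij))) _ (i, j)).
    apply In_idx_pairs; auto. }
  apply Rmult_le_reg_r with (/ (r i + r j)); [apply Rinv_0_lt_compat; lra|].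
  replace (nuM m c r * (r i + r j) * / (r i + r j)) with (nuM m c r) by (field; lra); auto.
Qed.

Theorem lemma4p2 (m : nat) (c : nat -> R * R) (r : nat -> R) :
  (3 <= m)%nat ->
  (forall i, (i < m)%nat -> 0 < r i) ->
  (forall i j, (i < m)%nat -> (j < m)%nat -> i <> j -> (c i, r i) <> (c j, r j)) ->
  0 < nuM m c r ->
  (forall lam, nuM m c r <= lam ->
     ((exists p : R * R, forall i, (i < m)%nat -> pdist p (c i) <= lam * r i)
      <-> 0 <= rhoM m c r lam))
  /\ 0 <= rhoM m c r (sqrt (4 / 3) * nuM m c r).
Proof.
  intros Hm Hr Hne Hnu.
  assert (Hrr : forall i j, (i < m)%nat -> (j < m)%nat -> 0 < r i + r j)
    by (intros i j Hi Hj; pose proof (Hr i Hi); pose proof (Hr j Hj); lra).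
  assert (Hequiv : forall lam, nuM m c r <= lam ->
     (exists p, forall i, (i < m)%nat -> pdist p (c i) <= lam * r i) <-> 0 <= rhoM m c r lam).
  { intros lam Hl; apply common_point_iff_rhoM_ge0; auto; try lia; try lra.
    intros i j Hi Hj Hij; eapply Rle_trans; [apply (pdist_le_nuM m); auto|].
    apply Rmult_le_compat_r; [left|]; auto. }
  split; auto.
  assert (1 <= sqrt (4 / 3)) by (rewrite <- sqrt_1; apply sqrt_le_1_alt; lra).
  apply Hequiv; [nra|].
  apply jung_disks; auto; [lia|intros; apply (pdist_le_nuM m); auto].
Qed.
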